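(* Let $f,g:[0,+\infty)\to[0,+\infty)$ be increasing functions with $\lim_{x\to+\infty}f(x)=\lim_{x\to+\infty}g(x)=+\infty$. Then there exist $\delta>0$ and a continuous increasing concave function $v:[0,+\infty)\to[0,+\infty)$ with $\lim_{x\to+\infty}v(x)=+\infty$ such that $\frac{v(f(x))}{v(g(x))}\ge\delta$ for every sufficiently large $x$. *)

From Stdlib Require Import Reals.
Open Scope R_scope.

Definition nonneg_half : R -> Prop := fun x => 0 <= x.

Definition maps_nonneg (f : R -> R) : Prop :=
  forall x, 0 <= x -> 0 <= f x.

(* "increasing" in the weak sense (non-decreasing) on [0,+oo). *)
Definition nondecr_on_nonneg (f : R -> R) : Prop :=
  forall x y, 0 <= x -> x <= y -> f x <= f y.

Definition strict_incr_on_nonneg (f : R -> R) : Prop :=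
  forall x y, 0 <= x -> x < y -> f x < f y.

Definition tends_to_infty (f : R -> R) : Prop :=
  forall M, exists N, forall x, N <= x -> M <= f x.

Definition concave_on_nonneg (v : R -> R) : Prop :=
  forall x y t, 0 <= x -> 0 <= y -> 0 <= t <= 1 ->
    t * v x + (1 - t) * v y <= v (t * x + (1 - t) * y).

(* continuous on [0,+oo) (relative to [0,+oo), i.e. one-sided at 0) *)
Definition continuous_on_nonneg (v : R -> R) : Prop :=
  forall x, 0 <= x -> continue_in v nonneg_half x.

(* Choose knots 0 = a_0 < a_1 < ... whose gaps a_(k+1) - a_k are at least 1 and
   nondecreasing, and which grow fast enough that f x <= a_(k+1) forces
   g x <= a_(k+2).  The piecewise linear v with v (a_k) = k is then continuous,
   strictly increasing, unbounded, and concave because its slopes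
   1 / (a_(k+1) - a_k) decrease.  For large x, if a_n <= f x < a_(n+1) with
   n >= 1, then g x < a_(n+3), so v (f x) / v (g x) >= n / (n + 3) >= 1/4. *)

From Stdlib Require Import Reals Lra Lia Arith ClassicalEpsilon.
Open Scope R_scope.

Lemma lipschitz_continuous_on_nonneg (v : R -> R) :
  (forall x y, 0 <= x -> x <= y -> 0 <= v y - v x <= y - x) ->
  continuous_on_nonneg v.
Proof.
  intros Hlip x Hx eps Heps; exists eps; split; [lra |].
  intros z [[Hz _] Hdist]; unfold nonneg_half in Hz; simpl in *; unfold R_dist in *.
  destruct (Rle_dec x z) as [Hxz | Hzx].
  - specialize (Hlip x z Hx Hxz).
    rewrite Rabs_right in Hdist by lra; rewrite Rabs_right by lra; lra.
  - specialize (Hlip z x Hz ltac:(lra)).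
    rewrite Rabs_left1 in Hdist by lra; rewrite Rabs_left1 by lra; lra.
Qed.

Lemma concave_on_nonneg_of_supporting_lines (v : R -> R) :
  (forall z, 0 <= z -> exists m c,
     v z = m * z + c /\ forall y, 0 <= y -> v y <= m * y + c) ->
  concave_on_nonneg v.
Proof.
  intros Hsupp x y t Hx Hy Ht.
  assert (Hz : 0 <= t * x + (1 - t) * y).
  { assert (0 <= t * x) by (apply Rmult_le_pos; lra).
    assert (0 <= (1 - t) * y) by (apply Rmult_le_pos; lra). lra. }
  destruct (Hsupp _ Hz) as [m [c [-> Hle]]].
  assert (t * v x <= t * (m * x + c)) by (apply Rmult_le_compat_l; [lra | auto]).
  assert ((1 - t) * v y <= (1 - t) * (m * y + c))
    by (apply Rmult_le_compat_l; [lra | auto]).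
  lra.
Qed.

Section KnotInterpolation.

Variable a : nat -> R.
Hypothesis a0 : a 0%nat = 0.
Hypothesis gap_ge1 : forall k, 1 <= a (S k) - a k.
Hypothesis gap_incr : forall k, a (S k) - a k <= a (S (S k)) - a (S k).

Lemma knot_le n m : (n <= m)%nat -> a n <= a m.
Proof. induction 1 as [| m _ IH]; [lra | pose proof (gap_ge1 m); lra]. Qed.

Lemma INR_le_knot n : INR n <= a n.
Proof.
  induction n as [| n IH]; [simpl; lra |].
  rewrite S_INR; pose proof (gap_ge1 n); lra.
Qed.

Lemma knot_interval_exists y : 0 <= y -> exists n, a n <= y < a (S n).
Proof.
  intros Hy.
  destruct (INR_archimed 1 y ltac:(lra)) as [m Hm]; rewrite Rmult_1_r in Hm.
  assert (Hym : y < a m) by (pose proof (INR_le_knot m); lra).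
  clear Hm; induction m as [| m IH]; [lra |].
  destruct (Rlt_dec y (a m)) as [Hlt | Hge]; [auto | exists m; lra].
Qed.

Definition knot_index (y : R) : nat :=
  epsilon (inhabits 0%nat) (fun n => a n <= y < a (S n)).

Lemma knot_indexP y : 0 <= y -> a (knot_index y) <= y < a (S (knot_index y)).
Proof.
  intros Hy; exact (epsilon_spec _ _ (knot_interval_exists y Hy)).
Qed.

Lemma knot_index_ge y n : 0 <= y -> a n <= y -> (n <= knot_index y)%nat.
Proof.
  intros Hy Hn; destruct (le_lt_dec n (knot_index y)) as [| Hlt]; auto.
  destruct (knot_indexP y Hy).
  assert (a (S (knot_index y)) <= a n) by (apply knot_le; lia); lra.
Qed.

Lemma knot_index_le y m : 0 <= y -> y < a (S m) -> (knot_index y <= m)%nat.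
Proof.
  intros Hy Hm; destruct (le_lt_dec (knot_index y) m) as [| Hlt]; auto.
  destruct (knot_indexP y Hy).
  assert (a (S m) <= a (knot_index y)) by (apply knot_le; lia); lra.
Qed.

Definition chord (k : nat) (y : R) : R := INR k + (y - a k) / (a (S k) - a k).

Definition knot_interp (y : R) : R := chord (knot_index y) y.

Lemma chord_sub k x y : chord k y - chord k x = (y - x) / (a (S k) - a k).
Proof. unfold chord, Rdiv; ring. Qed.

Lemma chord_incr k x y : x < y -> chord k x < chord k y.
Proof.
  intros Hxy; pose proof (gap_ge1 k).
  assert (0 < (y - x) / (a (S k) - a k)) by (apply Rdiv_lt_0_compat; lra).
  pose proof (chord_sub k x y); lra.
Qed.

(* Consecutive chords agree at a_(k+1), and the later one is flatter. *)
Lemma chord_sub_succ k y :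
  chord k y - chord (S k) y =
  (y - a (S k)) * (/ (a (S k) - a k) - / (a (S (S k)) - a (S k))).
Proof.
  pose proof (gap_ge1 k); pose proof (gap_ge1 (S k)).
  unfold chord; rewrite S_INR; field; lra.
Qed.

Lemma inv_gap_antitone k : / (a (S (S k)) - a (S k)) <= / (a (S k) - a k).
Proof. apply Rinv_le_contravar; [pose proof (gap_ge1 k); lra | apply gap_incr]. Qed.

Lemma chord_le_below k m y : a m <= y -> (k <= m)%nat -> chord m y <= chord k y.
Proof.
  intros Hy Hkm; induction Hkm as [| m Hkm IH]; [lra |].
  assert (chord (S m) y <= chord m y).
  { pose proof (chord_sub_succ m y); pose proof (inv_gap_antitone m).
    assert (0 <= (y - a (S m)) * (/ (a (S m) - a m) - / (a (S (S m)) - a (S m))))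
      by (apply Rmult_le_pos; lra).
    lra. }
  pose proof (gap_ge1 m); pose proof (IH ltac:(lra)); lra.
Qed.

Lemma chord_le_above m k y : y <= a (S m) -> (m <= k)%nat -> chord m y <= chord k y.
Proof.
  intros Hy Hmk; induction Hmk as [| k Hmk IH]; [lra |].
  assert (y <= a (S k)) by (pose proof (knot_le (S m) (S k) ltac:(lia)); lra).
  pose proof (chord_sub_succ k y); pose proof (inv_gap_antitone k).
  assert ((y - a (S k)) * (/ (a (S k) - a k) - / (a (S (S k)) - a (S k))) <= 0)
    by nra.
  lra.
Qed.

Lemma knot_interp_le_chord k y : 0 <= y -> knot_interp y <= chord k y.
Proof.
  intros Hy; destruct (knot_indexP y Hy); unfold knot_interp.
  destruct (le_lt_dec k (knot_index y)).
  - apply chord_le_below; auto.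
  - apply chord_le_above; [lra | lia].
Qed.

Lemma knot_interp_bounds y :
  0 <= y -> INR (knot_index y) <= knot_interp y < INR (knot_index y) + 1.
Proof.
  intros Hy; destruct (knot_indexP y Hy) as [Hlo Hhi].
  set (n := knot_index y) in *; pose proof (gap_ge1 n).
  unfold knot_interp, chord; fold n.
  assert (0 <= (y - a n) / (a (S n) - a n)).
  { unfold Rdiv; apply Rmult_le_pos; [lra | left; apply Rinv_0_lt_compat; lra]. }
  assert ((y - a n) / (a (S n) - a n) < 1).
  { apply (Rmult_lt_reg_r (a (S n) - a n)); [lra |].
    unfold Rdiv; rewrite Rmult_assoc, Rinv_l, Rmult_1_r by lra; lra. }
  lra.
Qed.

Lemma knot_interp_strict_incr : strict_incr_on_nonneg knot_interp.
Proof.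
  intros x y Hx Hxy.
  pose proof (knot_interp_le_chord (knot_index y) x Hx).
  pose proof (chord_incr (knot_index y) x y Hxy); unfold knot_interp in *; lra.
Qed.

Lemma knot_interp_lipschitz x y :
  0 <= x -> x <= y -> 0 <= knot_interp y - knot_interp x <= y - x.
Proof.
  intros Hx Hxy; split.
  - destruct (Req_dec x y) as [-> | Hne]; [lra |].
    pose proof (knot_interp_strict_incr x y Hx ltac:(lra)); lra.
  - set (n := knot_index x); pose proof (gap_ge1 n).
    pose proof (knot_interp_le_chord n y ltac:(lra)).
    pose proof (chord_sub n x y).
    assert ((y - x) / (a (S n) - a n) <= y - x).
    { unfold Rdiv; rewrite <- (Rmult_1_r (y - x)) at 2.
      apply Rmult_le_compat_l; [lra |].
      rewrite <- Rinv_1; apply Rinv_le_contravar; lra. }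
    assert (knot_interp x = chord n x) by reflexivity; lra.
Qed.

Lemma knot_interp_concave : concave_on_nonneg knot_interp.
Proof.
  apply concave_on_nonneg_of_supporting_lines; intros z Hz.
  set (n := knot_index z); set (d := a (S n) - a n).
  exists (/ d), (INR n - a n / d); split.
  - unfold knot_interp, chord; fold n d; unfold Rdiv; ring.
  - intros y Hy; pose proof (knot_interp_le_chord n y Hy) as Hle.
    unfold chord in Hle; fold d in Hle; unfold Rdiv in *; lra.
Qed.

Lemma knot_interp_ge_index y n : a n <= y -> INR n <= knot_interp y.
Proof.
  intros Hn; pose proof (INR_le_knot n); pose proof (pos_INR n).
  pose proof (le_INR _ _ (knot_index_ge y n ltac:(lra) Hn)).
  pose proof (knot_interp_bounds y ltac:(lra)); lra.
Qed.

Lemma knot_interp_nonneg : maps_nonneg knot_interp.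
Proof.
  intros y Hy; pose proof (knot_interp_ge_index y 0 ltac:(rewrite a0; lra)).
  simpl in *; lra.
Qed.

Lemma knot_interp_unbounded : tends_to_infty knot_interp.
Proof.
  intros M; destruct (INR_archimed 1 M ltac:(lra)) as [n Hn]; rewrite Rmult_1_r in Hn.
  exists (a n); intros y Hy; pose proof (knot_interp_ge_index y n Hy); lra.
Qed.

Lemma knot_interp_ratio y z :
  a 1%nat <= y -> a 1%nat <= z -> z <= a (S (S (knot_index y))) ->
  / 4 <= knot_interp y / knot_interp z.
Proof.
  intros Hy Hz Hzy.
  assert (Hy0 : 0 <= y) by (pose proof (INR_le_knot 1); simpl in *; lra).
  assert (Hz0 : 0 <= z) by (pose proof (INR_le_knot 1); simpl in *; lra).
  set (n := knot_index y) in *.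
  assert (Hn : 1 <= INR n)
    by (apply (le_INR 1); exact (knot_index_ge y 1 Hy0 Hy)).
  assert (Hidx : (knot_index z <= S (S n))%nat).
  { apply knot_index_le; [lra |]; pose proof (gap_ge1 (S (S n))); lra. }
  apply le_INR in Hidx; rewrite !S_INR in Hidx.
  pose proof (knot_interp_bounds y Hy0) as By; fold n in By.
  pose proof (knot_interp_bounds z Hz0) as Bz.
  pose proof (knot_interp_ge_index z 1 Hz) as Hz1; simpl in Hz1.
  apply (Rmult_le_reg_r (knot_interp z)); [lra |].
  unfold Rdiv; rewrite Rmult_assoc, Rinv_l, Rmult_1_r by lra; lra.
Qed.

End KnotInterpolation.

Section AdaptedKnots.

Variable H : R -> R.

(* Pairs (a_n, a_n - a_(n-1)); taking the maximum keeps the gaps nondecreasing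
   while pushing a_(n+1) past H a_n. *)
Fixpoint knot_gap_seq (n : nat) : R * R :=
  match n with
  | O => (0, 1)
  | S n =>
      let (an, dn) := knot_gap_seq n in
      let d := Rmax dn (H an - an) in (an + d, d)
  end.

Definition adapted_knots (n : nat) : R := fst (knot_gap_seq n).

Lemma adapted_knots_gap n :
  adapted_knots (S n) - adapted_knots n = snd (knot_gap_seq (S n)).
Proof.
  unfold adapted_knots; simpl; destruct (knot_gap_seq n); simpl; ring.
Qed.

Lemma knot_gap_seq_succ n :
  snd (knot_gap_seq (S n)) =
  Rmax (snd (knot_gap_seq n)) (H (adapted_knots n) - adapted_knots n).
Proof. unfold adapted_knots; simpl; destruct (knot_gap_seq n); reflexivity. Qed.

Lemma adapted_knots_gap_incr n :
  adapted_knots (S n) - adapted_knots n <=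
  adapted_knots (S (S n)) - adapted_knots (S n).
Proof. rewrite !adapted_knots_gap, (knot_gap_seq_succ (S n)); apply Rmax_l. Qed.

Lemma adapted_knots_gap_ge1 n : 1 <= adapted_knots (S n) - adapted_knots n.
Proof.
  induction n as [| n IH].
  - rewrite adapted_knots_gap, knot_gap_seq_succ; apply Rmax_l.
  - pose proof (adapted_knots_gap_incr n); lra.
Qed.

Lemma adapted_knots_dominate n : H (adapted_knots n) <= adapted_knots (S n).
Proof.
  pose proof (adapted_knots_gap n); rewrite knot_gap_seq_succ in *.
  pose proof (Rmax_r (snd (knot_gap_seq n)) (H (adapted_knots n) - adapted_knots n)).
  lra.
Qed.

End AdaptedKnots.

Lemma exists_level_bound (f g : R -> R) :
  nondecr_on_nonneg g -> tends_to_infty f ->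
  exists H : R -> R, forall y x, 0 <= x -> f x <= y -> g x <= H y.
Proof.
  intros hgi hfl.
  destruct (choice (fun y X => forall x, X <= x -> y + 1 <= f x) (fun y => hfl (y + 1)))
    as [X HX].
  exists (fun y => g (Rmax 0 (X y))); intros y x Hx Hfx.
  apply hgi; [exact Hx |].
  destruct (Rle_dec (X y) x) as [Hle | Hgt].
  - specialize (HX y x Hle); lra.
  - pose proof (Rmax_r 0 (X y)); lra.
Qed.

Theorem lemma3p2 (f g : R -> R)
  (hf0 : maps_nonneg f) (hg0 : maps_nonneg g)
  (hfi : nondecr_on_nonneg f) (hgi : nondecr_on_nonneg g)
  (hfl : tends_to_infty f) (hgl : tends_to_infty g) :
  exists delta : R, 0 < delta /\
  exists v : R -> R,
    maps_nonneg v /\ continuous_on_nonneg v /\ strict_incr_on_nonneg v /\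
    concave_on_nonneg v /\ tends_to_infty v /\
    exists X : R, forall x, X <= x -> delta <= v (f x) / v (g x).
Proof.
  destruct (exists_level_bound f g hgi hfl) as [H HH].
  set (a := adapted_knots H).
  assert (a0 : a 0%nat = 0) by reflexivity.
  pose proof (adapted_knots_gap_ge1 H) as gap_ge1.
  pose proof (adapted_knots_gap_incr H) as gap_incr.
  exists (/ 4); split; [lra |].
  exists (knot_interp a); split; [| split; [| split; [| split; [| split]]]].
  - apply knot_interp_nonneg; auto.
  - apply lipschitz_continuous_on_nonneg, knot_interp_lipschitz; auto.
  - apply knot_interp_strict_incr; auto.
  - apply knot_interp_concave; auto.
  - apply knot_interp_unbounded; auto.
  - destruct (hfl (a 1%nat)) as [Xf HXf]; destruct (hgl (a 1%nat)) as [Xg HXg].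
    exists (Rmax 0 (Rmax Xf Xg)); intros x Hx.
    pose proof (Rmax_l 0 (Rmax Xf Xg)); pose proof (Rmax_r 0 (Rmax Xf Xg)).
    pose proof (Rmax_l Xf Xg); pose proof (Rmax_r Xf Xg).
    apply knot_interp_ratio; auto; [apply HXf; lra | apply HXg; lra |].
    set (n := knot_index a (f x)).
    destruct (knot_indexP a a0 gap_ge1 (f x) (hf0 x ltac:(lra))) as [_ Hfx]; fold n in Hfx.
    pose proof (HH (a (S n)) x ltac:(lra) ltac:(lra)).
    pose proof (adapted_knots_dominate H (S n)); unfold a in *; lra.
Qed.
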